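(* Consider an ontological model with two-element ontic state space $\Lambda=\{0,1\}$. Four preparation procedures $P_T,P_{\tilde T},P_\eta,P_{\tilde\eta}$ are represented by probability distributions (epistemic states) $\mu_T,\mu_{\tilde T},\mu_\eta,\mu_{\tilde\eta}$ on $\Lambda$, and these satisfy the preparation-noncontextuality constraint $$\mu_T(i)+\mu_{\tilde T}(i)=\mu_\eta(i)+\mu_{\tilde\eta}(i)\qquad\text{for all } i\in\Lambda .$$ A binary two-copy comparison measurement $M_{\mathrm{swap}}$ with outcomes pass/fail is represented by the SWAP-like response function $\xi_{\mathrm{pass}}(i,j)$ on pairs of ontic states given by the matrix $$\Xi_q=\begin{pmatrix}1&q\\ q&1\end{pmatrix},\qquad q\in[0,1),$$ i.e. $\xi_{\mathrm{pass}}(i,i)=1$ and $\xi_{\mathrm{pass}}(i,j)=q$ for $i\neq j$. Assume further there is a sharp single-copy binary test $M_T=\{T,\tilde T\}$, represented by a response function $\xi_{T}:\Lambda\to[0,1]$ (with $\xi_{\tilde T}=1-\xi_T$), such that $$p(T|M_T,P_T)=\sum_i \xi_T(i)\mu_T(i)=1,\qquad p(T|M_T,P_{\tilde T})=\sum_i\xi_T(i)\mu_{\tilde T}(i)=0,$$ and let $c:=p(T|M_T,P_\eta)=\sum_i\xi_T(i)\mu_\eta(i)$ be the confusability. Let $\eta_1,\eta_2\ge0$ with $\eta_1+\eta_2=1$ be given priors. Define $$p_{\mathrm{pur}}=\sum_{i,j}\xi_{\mathrm{pass}}(i,j)\mu_T(i)\mu_T(j),\qquad p_{\mathrm{mix}}^{(p)}=\sum_{i,j}\xi_{\mathrm{pass}}(i,j)\mu_T(i)\mu^{(p)}_\eta(j),$$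 where for $p\in S_2$ (identity or swap), $\mu_\eta^{(\mathrm{id})}=\mu_\eta$ and $\mu_\eta^{(\mathrm{swap})}(i)=\mu_\eta(1-i)$, and define the operational discriminability score $$D_{\mathrm{op}}=\max_{p\in S_2}\Big[(2p_{\mathrm{mix}}^{(p)}-1)+2\sqrt{\eta_1\eta_2(1-p_{\mathrm{pur}})}\Big].$$ Then $$D_{\mathrm{op}}\le 1-2(1-q)\min\{c,1-c\}.$$ In particular, after relabeling so that $c\le\tfrac12$, $D_{\mathrm{op}}\le 1-2(1-q)c$.
   Context: In an ontological model each preparation $P$ is represented by a probability distribution $\mu_P$ on the ontic space $\Lambda$, each measurement outcome $k$ of a measurement $M$ by a response function $\xi_{k|M}(\lambda)\in[0,1]$ with $\sum_k\xi_{k|M}=1$, and operational probabilities are $p(k|M,P)=\sum_\lambda\xi_{k|M}(\lambda)\mu_P(\lambda)$. For two-copy measurements on independently prepared systems the pass probability is $\sum_{i,j}\xi_{\mathrm{pass}}(i,j)\mu_P(i)\mu_{P'}(j)$. The constraint $\mu_T+\mu_{\tilde T}=\mu_\eta+\mu_{\tilde\eta}$ expresses preparation noncontextuality applied to the operational equivalence $\tfrac12P_T+\tfrac12P_{\tilde T}\simeq\tfrac12P_\eta+\tfrac12P_{\tilde\eta}$ of 50–50 mixtures. *)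

From HB Require Import structures.
From mathcomp Require Import all_boot all_order all_algebra.
Set Implicit Arguments. Unset Strict Implicit. Unset Printing Implicit Defensive.
Import Order.TTheory GRing.Theory Num.Theory.
Local Open Scope ring_scope.

(* Ontic state space Lambda = {0,1} is 'I_2. *)

Definition is_distr (R : realFieldType) (mu : 'I_2 -> R) : Prop :=
  (forall i, 0 <= mu i) /\ \sum_(i < 2) mu i = 1.

Definition is_response (R : realFieldType) (xi : 'I_2 -> R) : Prop :=
  forall i, 0 <= xi i <= 1.

Definition xi_pass (R : realFieldType) (q : R) (i j : 'I_2) : R :=
  if i == j then 1 else q.

Definition prob1 (R : realFieldType) (xi mu : 'I_2 -> R) : R :=
  \sum_(i < 2) xi i * mu i.

Definition prob_pass (R : realFieldType) (q : R) (mu mu' : 'I_2 -> R) : R :=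
  \sum_(i < 2) \sum_(j < 2) xi_pass q i j * mu i * mu' j.

(* Relabeling of ontic states by p in S_2: identity or swap (i |-> 1 - i). *)
Definition relabel (R : realFieldType) (swap : bool) (mu : 'I_2 -> R) : 'I_2 -> R :=
  fun i => if swap then mu (rev_ord i) else mu i.

Definition p_pur (R : realFieldType) (q : R) (muT : 'I_2 -> R) : R :=
  prob_pass q muT muT.

Definition p_mix (R : realFieldType) (q : R) (swap : bool) (muT mueta : 'I_2 -> R) : R :=
  prob_pass q muT (relabel swap mueta).

Definition D_op (R : rcfType) (q eta1 eta2 : R) (muT mueta : 'I_2 -> R) : R :=
  let score (swap : bool) :=
    (2 * p_mix q swap muT mueta - 1) + 2 * Num.sqrt (eta1 * eta2 * (1 - p_pur q muT)) in
  Num.max (score false) (score true).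

From HB Require Import structures.
From mathcomp Require Import all_boot all_order all_algebra.
From mathcomp Require Import lra.
Set Implicit Arguments. Unset Strict Implicit. Unset Printing Implicit Defensive.
Import Order.TTheory GRing.Theory Num.Theory.
Local Open Scope ring_scope.

(* A test that passes P_T surely and P_T~ never forces mu_T and xi_T to be the
   point mass, resp. the indicator, of one ontic state k.  Then p_pur = 1, so the
   square-root term vanishes, c = mu_eta(k), and the two relabelings give
   2 p_mix - 1 = 1 - 2(1 - q)(1 - c) and 1 - 2(1 - q)c: the bound holds with
   equality. *)

Section TwoStates.

Variable R : realFieldType.
Implicit Types (mu nu xi : 'I_2 -> R) (k : 'I_2).

Lemma sum_ord2_rev (F : 'I_2 -> R) k : \sum_(i < 2) F i = F k + F (rev_ord k).
Proof.
rewrite big_ord_recl big_ord1.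
have [-> | ->] : k = ord0 \/ k = ord_max.
  by case: k => [[|[|]]] // ?; [left | right]; apply: val_inj.
- by congr (F _ + F _); apply: val_inj.
- by rewrite addrC; congr (F _ + F _); apply: val_inj.
Qed.

Lemma eq_rev_ord2F k : (k == rev_ord k) = false.
Proof. by apply/negbTE; case: k => [[|[|]]]. Qed.

Lemma distr_rev_ord mu k : is_distr mu -> mu (rev_ord k) = 1 - mu k.
Proof. by case=> _; rewrite (sum_ord2_rev _ k) => <-; rewrite addrC addKr. Qed.

Lemma prob1_eq1_support xi mu :
  is_response xi -> is_distr mu -> prob1 xi mu = 1 -> forall i, (1 - xi i) * mu i = 0.
Proof.
move=> xi01 [mu_ge0 mu_sum] xi_mu.
have sum0 : \sum_(i < 2) (1 - xi i) * mu i = 0.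
  under eq_bigr do rewrite mulrBl mul1r.
  by rewrite sumrB mu_sum -xi_mu subrr.
move=> i; apply: (psumr_eq0P _ sum0) => // j _.
by have /andP[_ xi_le1] := xi01 j; rewrite mulr_ge0 ?subr_ge0.
Qed.

Lemma prob1_eq0_support xi mu :
  is_response xi -> is_distr mu -> prob1 xi mu = 0 -> forall i, xi i * mu i = 0.
Proof.
move=> xi01 [mu_ge0 _] xi_mu i.
apply: (psumr_eq0P _ xi_mu) => // j _.
by have /andP[xi_ge0 _] := xi01 j; rewrite mulr_ge0.
Qed.

Lemma sharp_test_point_mass xi muT muTt :
    is_response xi -> is_distr muT -> is_distr muTt ->
    prob1 xi muT = 1 -> prob1 xi muTt = 0 ->
  exists k, [/\ muT k = 1, muT (rev_ord k) = 0, xi k = 1 & xi (rev_ord k) = 0].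
Proof.
move=> xi01 dT dTt xi_T xi_Tt.
have suppT := prob1_eq1_support xi01 dT xi_T.
have suppTt := prob1_eq0_support xi01 dTt xi_Tt.
have [k muTk_neq0] : exists k, muT k != 0.
  have [muT0 | ] := eqVneq (muT ord0) 0; last by exists ord0.
  by exists (rev_ord ord0); rewrite (distr_rev_ord _ dT) muT0 subr0 oner_neq0.
have xik : xi k = 1.
  apply/eqP; move/eqP: (suppT k).
  by rewrite mulf_eq0 (negbTE muTk_neq0) orbF subr_eq0 eq_sym.
have muTtk : muTt k = 0 by move: (suppTt k); rewrite xik mul1r.
have xirk : xi (rev_ord k) = 0.
  by move: (suppTt (rev_ord k)); rewrite (distr_rev_ord _ dTt) muTtk subr0 mulr1.
have muTrk : muT (rev_ord k) = 0 by move: (suppT (rev_ord k)); rewrite xirk subr0 mul1r.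
have muTk : muT k = 1 by move: muTrk; rewrite (distr_rev_ord _ dT); lra.
by exists k.
Qed.

Lemma prob1_indicator xi mu k :
  xi k = 1 -> xi (rev_ord k) = 0 -> prob1 xi mu = mu k.
Proof. by move=> xik xirk; rewrite /prob1 (sum_ord2_rev _ k) xik xirk mul1r mul0r addr0. Qed.

Lemma prob_pass_point_mass q mu nu k :
  mu k = 1 -> mu (rev_ord k) = 0 -> prob_pass q mu nu = nu k + q * nu (rev_ord k).
Proof.
move=> muk murk; rewrite /prob_pass (sum_ord2_rev _ k) murk.
under [X in _ + X]eq_bigr do rewrite mulr0 mul0r.
rewrite big1_eq addr0 (sum_ord2_rev _ k) muk /xi_pass eqxx eq_rev_ord2F.
by rewrite !mulr1 mul1r.
Qed.

End TwoStates.

Lemma max_subr_mul_min (R : realDomainType) (a b x y : R) :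
  0 <= a -> Num.max (b - a * x) (b - a * y) = b - a * Num.min x y.
Proof.
move=> a_ge0; have [xy | yx] := leP x y.
- by rewrite max_l // lerD2l lerN2; apply: ler_wpM2l.
- by rewrite max_r // lerD2l lerN2; apply/ler_wpM2l/ltW.
Qed.

Lemma D_op_point_mass (R : rcfType) (q eta1 eta2 : R) (muT mueta : 'I_2 -> R) k :
    muT k = 1 -> muT (rev_ord k) = 0 -> is_distr mueta ->
  D_op q eta1 eta2 muT mueta
    = Num.max (1 - 2 * (1 - q) * (1 - mueta k)) (1 - 2 * (1 - q) * mueta k).
Proof.
move=> muTk muTrk deta.
rewrite /D_op /p_pur /p_mix !(prob_pass_point_mass _ _ muTk muTrk) muTk muTrk /relabel.
rewrite rev_ordK (distr_rev_ord _ deta) mulr0 addr0 subrr mulr0 sqrtr0 mulr0 addr0.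
by congr Num.max; lra.
Qed.

Theorem theorem1 (R : rcfType)
    (muT muTt mueta muetat xiT : 'I_2 -> R) (q eta1 eta2 : R)
    (hT : is_distr muT) (hTt : is_distr muTt)
    (heta : is_distr mueta) (hetat : is_distr muetat)
    (hPNC : forall i, muT i + muTt i = mueta i + muetat i)
    (hq : 0 <= q < 1)
    (hxi : is_response xiT)
    (hsharp1 : prob1 xiT muT = 1) (hsharp0 : prob1 xiT muTt = 0)
    (heta1 : 0 <= eta1) (heta2 : 0 <= eta2) (heta12 : eta1 + eta2 = 1) :
  let c := prob1 xiT mueta in
  D_op q eta1 eta2 muT mueta <= 1 - 2 * (1 - q) * Num.min c (1 - c).
Proof.
have [k [muTk muTrk xik xirk]] := sharp_test_point_mass hxi hT hTt hsharp1 hsharp0.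
have scale_ge0 : 0 <= 2 * (1 - q) by case/andP: hq => _ q_lt1; lra.
rewrite /= (prob1_indicator _ xik xirk) (D_op_point_mass _ _ _ muTk muTrk heta).
by rewrite max_subr_mul_min // minC.
Qed.
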